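(* Let $A,B\subseteq\mathbb{R}^n$ be finite (Euclidean metric), $\beta>0$ and $\delta>d_P(A,B)$. For all $r>0$ and $k>\delta$, $$\mathrm{DCr}^\beta_{r,k}(A)\subseteq\mathrm{DCr}^\beta_{r',k-\delta}(B)\quad\text{and}\quad\mathrm{DCr}^\beta_{r,k}(B)\subseteq\mathrm{DCr}^\beta_{r',k-\delta}(A),$$ where $r'=\max\{1,2\beta\}\big((1+\beta^{-1})r+\delta\big)$.
   Context: $d$ Euclidean, $\bar B_d(x,r)=\{y:d(x,y)\le r\}$. For finite $A$, $k>0$, $x\in\mathbb{R}^n$, $\mathrm{core}^A_k(x)$ is the distance from $x$ to its $\lceil k\rceil$-th nearest neighbor in $A$ (each point of $A$ counted once, $x$ itself counting if $x\in A$); equivalently $\min\{r\ge0:|\bar B_d(x,r)\cap A|\ge k\}$, and $\infty$ if $k>|A|$. For $\beta>0$: $\Lambda^\beta_k(a,x)=\max\{\beta\,\mathrm{core}^A_k(a),d(a,x)\}$, $B^\beta_{r,k}(a)=\{x:\Lambda^\beta_k(a,x)\le r\}$, $\mathrm{Vor}_A(a)=\{x:d(a,x)\le d(a',x)\ \forall a'\in A\}$, and $\mathrm{DCr}^\beta_{r,k}(A)=\bigcup_{a\in A}\big(B^\beta_{r,k}(a)\cap\mathrm{Vor}_A(a)\big)$ (similarly for $B$). For $S\subseteq\mathbb{R}^n$, $\delta\ge0$: $S^\delta=\bigcup_{s\in S}\bar B_d(s,\delta)$. Counting Prohorov distance: $d_P(A,B)=\sup_{S\text{ closed}}\inf\{\delta\ge0:|S\cap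 A|\le|S^\delta\cap B|+\delta\text{ and }|S\cap B|\le|S^\delta\cap A|+\delta\}$. *)

From HB Require Import structures.
From mathcomp Require Import all_boot all_order all_algebra.
From mathcomp Require Import all_classical all_reals constructive_ereal ereal topology normedtype.
Set Implicit Arguments. Unset Strict Implicit. Unset Printing Implicit Defensive.
Import Order.TTheory GRing.Theory Num.Theory.
Local Open Scope classical_set_scope.
Local Open Scope ring_scope.

Section Defs.
Variables (R : realType) (n : nat).
Notation pt := 'rV[R]_n.

Definition edist (x y : pt) : R :=
  Num.sqrt (\sum_(i < n) (x ord0 i - y ord0 i) ^+ 2).

Definition cball (x : pt) (r : R) : set pt := [set y | edist x y <= r].

(* number of points of the finite set A (a duplicate-free list) lying in S *)
Definition cnt (S : set pt) (A : seq pt) : nat := count (fun a => `[< S a >]) A.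

Definition core (A : seq pt) (k : R) (x : pt) : \bar R :=
  ereal_inf [set r%:E | r in [set r : R | 0 <= r /\ k <= (cnt (cball x r) A)%:R]].

Definition Lambda (A : seq pt) (beta k : R) (a x : pt) : \bar R :=
  Order.max (beta%:E * core A k a)%E (edist a x)%:E.

Definition Bball (A : seq pt) (beta r k : R) (a : pt) : set pt :=
  [set x | (Lambda A beta k a x <= r%:E)%E].

Definition Vor (A : seq pt) (a : pt) : set pt :=
  [set x | forall a', a' \in A -> edist a x <= edist a' x].

Definition DCr (A : seq pt) (beta r k : R) : set pt :=
  [set x | exists2 a, a \in A & (Bball A beta r k a `&` Vor A a) x].

Definition eclosed (S : set pt) : Prop :=
  forall x, (forall e : R, 0 < e -> exists2 s, S s & edist x s < e) -> S x.

Definition thicken (S : set pt) (d : R) : set pt :=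
  \bigcup_(s in S) cball s d.

Definition prohorov_cond (A B : seq pt) (S : set pt) (d : R) : Prop :=
  0 <= d /\
  (cnt S A)%:R <= (cnt (thicken S d) B)%:R + d /\
  (cnt S B)%:R <= (cnt (thicken S d) A)%:R + d.

Definition dP (A B : seq pt) : \bar R :=
  ereal_sup [set ereal_inf [set d%:E | d in prohorov_cond A B S]
            | S in [set S : set pt | eclosed S]].

End Defs.

(* Let x lie in the cell of a in DCr^beta_{r,k}(A), so d(a,x) <= r and
   core^A_k(a) <= r/beta.  Applying the Prohorov bound to a closed ball around a
   shows that the ball enlarged by delta holds at least k - delta points of B,
   hence core^B_{k-delta}(a) <= r/beta + delta.  Let b be the point of B nearest
   to x; then d(b,x) <= d(a,x) + core^B_{k-delta}(a) <= Q := (1 + 1/beta) r + delta,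
   and since core is 1-Lipschitz in its centre,
   core^B_{k-delta}(b) <= d(b,a) + r/beta + delta <= 2Q.  Both quantities
   defining Lambda at (b,x) are therefore at most max(1, 2 beta) Q.  The
   argument is symmetric because d_P is. *)
From Pilot Require Import Defs.
From HB Require Import structures.
From mathcomp Require Import all_boot all_order all_algebra.
From mathcomp Require Import all_classical all_reals constructive_ereal ereal topology normedtype.
From mathcomp Require Import ring lra.
Set Implicit Arguments. Unset Strict Implicit. Unset Printing Implicit Defensive.
Import Order.TTheory GRing.Theory Num.Theory.
Local Open Scope classical_set_scope.
Local Open Scope ring_scope.

Section CauchySchwarz.
Variables (R : realFieldType) (n : nat).
Implicit Types (u v : 'I_n -> R).

Lemma cauchy_schwarz u v :
  (\sum_i u i * v i) ^+ 2 <= (\sum_i u i ^+ 2) * (\sum_i v i ^+ 2).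
Proof.
(* Lagrange's identity: the gap is half the sum of the squares (u_i v_j - u_j v_i)^2. *)
have lagrange : 0 <= \sum_i \sum_j (u i * v j - u j * v i) ^+ 2.
  by apply: sumr_ge0 => i _; apply: sumr_ge0 => j _; exact: sqr_ge0.
have row_sum i : \sum_j (u i * v j - u j * v i) ^+ 2 =
    u i ^+ 2 * (\sum_j v j ^+ 2) + v i ^+ 2 * (\sum_j u j ^+ 2)
    - 2 * (u i * v i) * (\sum_j u j * v j).
  by rewrite !mulr_sumr -big_split -sumrB /=; apply: eq_bigr => j _; ring.
rewrite (eq_bigr _ (fun i _ => row_sum i)) sumrB big_split /= -!mulr_suml in lagrange.
by rewrite -mulr_sumr in lagrange; rewrite expr2; nra.
Qed.
End CauchySchwarz.

Section Minkowski.
Variables (R : realType) (n : nat).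
Implicit Types (u v : 'I_n -> R).

Lemma minkowski u v : Num.sqrt (\sum_i (u i + v i) ^+ 2) <=
  Num.sqrt (\sum_i u i ^+ 2) + Num.sqrt (\sum_i v i ^+ 2).
Proof.
set a := \sum_i u i ^+ 2; set b := \sum_i v i ^+ 2; set c := \sum_i u i * v i.
have a0 : 0 <= a by apply: sumr_ge0 => i _; exact: sqr_ge0.
have b0 : 0 <= b by apply: sumr_ge0 => i _; exact: sqr_ge0.
have expand : \sum_i (u i + v i) ^+ 2 = a + b + 2 * c.
  by rewrite mulr_sumr -!big_split /=; apply: eq_bigr => i _; ring.
have cs : c <= Num.sqrt a * Num.sqrt b.
  rewrite -sqrtrM //; apply: le_trans (ler_norm _) _.
  by rewrite -sqrtr_sqr ler_wsqrtr // cauchy_schwarz.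
rewrite -[X in _ <= X]ger0_norm ?addr_ge0 ?sqrtr_ge0 // -sqrtr_sqr ler_wsqrtr // expand.
have := sqr_sqrtr a0; have := sqr_sqrtr b0; have := sqrtr_ge0 a; have := sqrtr_ge0 b.
by move: cs; rewrite expr2; nra.
Qed.
End Minkowski.

Section Euclid.
Variables (R : realType) (n : nat).
Implicit Types (x y z : 'rV[R]_n) (A B : seq 'rV[R]_n) (S T : set 'rV[R]_n).

Lemma edist_ge0 x y : 0 <= Defs.edist x y.
Proof. exact: sqrtr_ge0. Qed.

Lemma edistC x y : Defs.edist x y = Defs.edist y x.
Proof. by rewrite /Defs.edist; congr Num.sqrt; apply: eq_bigr => i _; ring. Qed.

Lemma edist_triangle x y z : Defs.edist x z <= Defs.edist x y + Defs.edist y z.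
Proof.
have := minkowski (fun i => x ord0 i - y ord0 i) (fun i => y ord0 i - z ord0 i).
by congr (Num.sqrt _ <= _); apply: eq_bigr => i _; congr (_ ^+ 2); ring.
Qed.

Lemma eclosed_set0 : eclosed (@set0 'rV[R]_n).
Proof. by move=> x /(_ 1 ltr01) []. Qed.

Lemma eclosed_cball x rho : eclosed (cball x rho).
Proof.
move=> y near_y; apply/ler_addgt0Pr => e e0.
have [s xs ys] := near_y e e0.
apply: le_trans (edist_triangle x s y) _; apply: lerD => //.
by rewrite edistC ltW.
Qed.

Lemma cball_le x rho rho' : rho <= rho' -> cball x rho `<=` cball x rho'.
Proof. by move=> le_rho y /le_trans; apply. Qed.

Lemma thicken_cball x rho d : thicken (cball x rho) d `<=` cball x (rho + d).
Proof. by move=> y [s xs sy]; apply: le_trans (edist_triangle x s y) _; exact: lerD. Qed.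

Lemma cnt_subset S T A : S `<=` T -> (cnt S A <= cnt T A)%N.
Proof. by move=> ST; apply: sub_count => x /asboolP Sx; apply/asboolP; exact: ST. Qed.

Lemma cnt_gt0 S A : (0 < cnt S A)%N -> exists2 a, a \in A & S a.
Proof. by rewrite /cnt -has_count => /hasP [a aA /asboolP Sa]; exists a. Qed.

Lemma exists_Vor A x : A != [::] -> exists2 a, a \in A & Vor A a x.
Proof.
elim: A => [//|c A IH] _; case: (eqVneq A [::]) => [->|/IH [a aA a_min]].
  by exists c; rewrite ?mem_head // => a'; rewrite inE => /eqP ->.
have [cx_le|ax_lt] := leP (Defs.edist c x) (Defs.edist a x).
  exists c; first exact: mem_head.
  by move=> a'; rewrite inE => /orP [/eqP ->//|/a_min]; exact: le_trans.
exists a; first by rewrite inE aA orbT.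
by move=> a'; rewrite inE => /orP [/eqP ->|/a_min //]; exact: ltW.
Qed.

End Euclid.
Arguments eclosed_cball {R n} x rho.
Arguments thicken_cball {R n} x rho d.

Section Core.
Variables (R : realType) (n : nat).
Implicit Types (a b x : 'rV[R]_n) (A B : seq 'rV[R]_n).

Lemma core_le A k a rho : 0 <= rho -> k <= (cnt (cball a rho) A)%:R ->
  (core A k a <= rho%:E)%E.
Proof. by move=> rho0 k_rho; apply: ereal_inf_lbound; exists rho. Qed.

Lemma core_le_approx A k a c e : (core A k a <= c%:E)%E -> 0 < e ->
  exists rho, [/\ 0 <= rho, k <= (cnt (cball a rho) A)%:R & rho < c + e].
Proof.
move=> core_a e0; have : (core A k a < (c + e)%:E)%E.
  by apply: le_lt_trans core_a _; rewrite lte_fin ltrDl.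
by move=> /ereal_inf_lt [_ [rho [rho0 k_rho] <-]]; rewrite lte_fin => rho_c; exists rho.
Qed.

Lemma core_le_point A k a c e : 0 < k -> (core A k a <= c%:E)%E -> 0 < e ->
  exists2 b, b \in A & Defs.edist a b < c + e.
Proof.
move=> k0 core_a /(core_le_approx core_a) [rho [_ k_rho rho_c]].
have /cnt_gt0 [b bA ab] : (0 < cnt (cball a rho) A)%N.
  by rewrite -(ltr_nat R); apply: lt_le_trans k_rho.
by exists b => //; apply: le_lt_trans rho_c.
Qed.

Lemma core_le_edistD A k a b c : (core A k a <= c%:E)%E ->
  (core A k b <= (Defs.edist b a + c)%:E)%E.
Proof.
move=> core_a; apply/lee_addgt0Pr => e /(core_le_approx core_a) [rho [rho0 k_rho rho_c]].
apply: (@le_trans _ _ (Defs.edist b a + rho)%:E).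
  apply: core_le; first by rewrite addr_ge0 ?edist_ge0.
  apply: le_trans k_rho _; rewrite ler_nat; apply: cnt_subset => y ay.
  by apply: le_trans (edist_triangle b a y) _; rewrite lerD2l.
by rewrite -EFinD lee_fin; lra.
Qed.

Lemma edist_Vor_le A k a b x c : 0 < k -> (core A k a <= c%:E)%E -> Vor A b x ->
  Defs.edist b x <= Defs.edist a x + c.
Proof.
move=> k0 core_a b_x; apply/ler_addgt0Pr => e /(core_le_point k0 core_a) [b' b'A ab'].
apply: le_trans (b_x _ b'A) _; apply: le_trans (edist_triangle b' a x) _.
by rewrite edistC; lra.
Qed.

Lemma BballE A beta r k a x : Bball A beta r k a x <->
  (beta%:E * core A k a <= r%:E)%E /\ Defs.edist a x <= r.
Proof. by rewrite /Bball /Lambda /= ge_max lee_fin; split => /andP. Qed.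

End Core.

Section Prohorov.
Variables (R : realType) (n : nat).
Implicit Types (a : 'rV[R]_n) (A B : seq 'rV[R]_n) (S : set 'rV[R]_n).

Lemma dPC A B : dP A B = dP B A.
Proof.
rewrite /dP; congr ereal_sup; apply: eq_imagel => S _; congr ereal_inf.
by congr (_ @` _); apply/seteqP; split => d [d0 [AB BA]].
Qed.

Lemma dP_lt_cond A B delta S : (dP A B < delta%:E)%E -> eclosed S ->
  exists2 d, d < delta & prohorov_cond A B S d.
Proof.
move=> dP_delta S_closed.
have : (ereal_inf [set d%:E | d in prohorov_cond A B S] <= dP A B)%E.
  by apply: ereal_sup_ubound; exists S.
move=> /le_lt_trans /(_ dP_delta) /ereal_inf_lt [_ [d S_d <-]].
by rewrite lte_fin => d_delta; exists d.
Qed.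

Lemma dP_lt_gt0 A B delta : (dP A B < delta%:E)%E -> 0 < delta.
Proof.
by move=> /dP_lt_cond /(_ (@eclosed_set0 R n)) [d d_delta [d0 _]]; apply: le_lt_trans d_delta.
Qed.

Lemma cnt_cball_le A B delta a rho : (dP A B < delta%:E)%E ->
  (cnt (cball a rho) A)%:R <= (cnt (cball a (rho + delta)) B)%:R + delta.
Proof.
move=> /dP_lt_cond /(_ (eclosed_cball a rho)) [d d_delta [_ [A_B _]]].
apply: le_trans A_B _; apply: lerD (ltW d_delta); rewrite ler_nat; apply: cnt_subset.
apply: subset_trans (thicken_cball a rho d) (cball_le _).
by rewrite lerD2l ltW.
Qed.

Lemma core_le_transfer A B delta k a c : (dP A B < delta%:E)%E ->
  (core A k a <= c%:E)%E -> (core B (k - delta) a <= (c + delta)%:E)%E.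
Proof.
move=> dP_delta core_a; have delta0 := dP_lt_gt0 dP_delta.
apply/lee_addgt0Pr => e /(core_le_approx core_a) [rho [rho0 k_rho rho_c]].
apply: (@le_trans _ _ (rho + delta)%:E).
  apply: core_le; first by rewrite addr_ge0 // ltW.
  by have := cnt_cball_le a rho dP_delta; lra.
by rewrite -EFinD lee_fin; lra.
Qed.

End Prohorov.

Lemma DCr_subset (R : realType) (n : nat) (A B : seq 'rV[R]_n) (beta delta r k : R) :
  0 < beta -> delta < k -> (dP A B < delta%:E)%E ->
  DCr A beta r k `<=`
  DCr B beta (Num.max 1 (2 * beta) * ((1 + beta^-1) * r + delta)) (k - delta).
Proof.
move=> beta0 delta_k dP_delta x [a _ [/BballE [core_a ax] _]].
have k_delta : 0 < k - delta by rewrite subr_gt0.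
have coreA_a : (core A k a <= (r / beta)%:E)%E.
  by rewrite -(@lee_pmul2l _ beta%:E) // ?lte_fin // -EFinM mulrC divfK ?gt_eqF.
have coreB_a := core_le_transfer dP_delta coreA_a.
have B_neq0 : B != [::].
  have [b' b'B _] := core_le_point k_delta coreB_a ltr01.
  by apply/eqP => B0; rewrite B0 in b'B.
have [b bB b_x] := exists_Vor x B_neq0.
set Q := (1 + beta^-1) * r + delta.
have QE : Q = r + r / beta + delta by rewrite /Q mulrDl mul1r mulrC.
have bx : Defs.edist b x <= Q.
  by have := edist_Vor_le k_delta coreB_a b_x; lra.
have Q0 : 0 <= Q := le_trans (edist_ge0 b x) bx.
have coreB_b : (core B (k - delta) b <= (2 * Q)%:E)%E.
  apply: le_trans (core_le_edistD b coreB_a) _; rewrite lee_fin.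
  by have := edist_triangle b x a; rewrite (edistC x a); lra.
exists b => //; split => //; apply/BballE; split.
  apply: le_trans (lee_wpmul2l _ coreB_b) _; first by rewrite lee_fin ltW.
  by rewrite -EFinM lee_fin mulrA ler_wpM2r // [beta * 2]mulrC le_max lexx orbT.
by apply: le_trans bx _; rewrite -{1}(mul1r Q) ler_wpM2r // le_max lexx.
Qed.

Theorem mainTheorem8 (R : realType) (n : nat) (A B : seq 'rV[R]_n)
  (uA : uniq A) (uB : uniq B) (beta delta : R) (hbeta : 0 < beta)
  (hdelta : (dP A B < delta%:E)%E) :
  forall r k : R, 0 < r -> delta < k ->
  let r' := Num.max 1 (2 * beta) * ((1 + beta^-1) * r + delta) in
  DCr A beta r k `<=` DCr B beta r' (k - delta) /\
  DCr B beta r k `<=` DCr A beta r' (k - delta).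
Proof.
move=> r k _ delta_k r'.
by split; apply: DCr_subset; rewrite // dPC.
Qed.
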